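(* In the one-dimensional perturbed elephant random walk with stops, suppose $\epsilon+r\neq1$ and $\gamma=\frac{1+\epsilon r}{2}$. Then for all $t\ge1$ $$\mathbb{E}[X_t^2]=-\frac{t}{r(\epsilon+r)}-\frac{r\,\Gamma(t+1-\epsilon-r)}{(\epsilon+r)(\epsilon+r+\epsilon r)\Gamma(1-\epsilon-r)\Gamma(t)}+\frac{1}{\Gamma(1+\epsilon r)}\Big[\frac{1}{r(\epsilon+r)}+\frac{r}{(\epsilon+r)(\epsilon+r+\epsilon r)}\Big]\frac{\Gamma(t+1+\epsilon r)}{\Gamma(t)},$$ and hence $$\lim_{t\to\infty}\frac{\mathbb{E}[X_t^2]}{t^{1+\epsilon r}}=\frac{1}{\Gamma(1+\epsilon r)}\Big[\frac{1}{r(\epsilon+r)}+\frac{r}{(\epsilon+r)(\epsilon+r+\epsilon r)}\Big].$$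
   Context: One-dimensional perturbed elephant random walk with stops (perturbed ERWS): fix $p,q,r\in(0,1)$ with $p+q+r=1$, $\epsilon\in(0,1)$ and $s\in(0,1)$, and set $\gamma=p-q$. The steps $\sigma_1,\sigma_2,\dots$ take values in $\{-1,0,1\}$, $X_0=0$ and $X_t=\sigma_1+\dots+\sigma_t$. The first step satisfies $P(\sigma_1=1)=s$, $P(\sigma_1=-1)=1-s$. For $t\ge1$, conditionally on $\sigma_1,\dots,\sigma_t$, an index $k\in\{1,\dots,t\}$ is chosen uniformly at random. If $\sigma_k=\pm1$, then $\sigma_{t+1}=\sigma_k$ with probability $p$, $\sigma_{t+1}=-\sigma_k$ with probability $q$, and $\sigma_{t+1}=0$ with probability $r$. If $\sigma_k=0$, then $\sigma_{t+1}=1$ with probability $\epsilon/2$, $\sigma_{t+1}=-1$ with probability $\epsilon/2$, and $\sigma_{t+1}=0$ with probability $1-\epsilon$. *)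

From Stdlib Require Import Reals ZArith List ClassicalEpsilon.
Import ListNotations.
Open Scope R_scope.

(* Euler/Gauss product formula for the Gamma function:
   Gamma x = lim_{n->oo} n^x n! / (x (x+1) ... (x+n)),
   valid for every x that is not a non-positive integer. *)
Fixpoint rising_prod (x : R) (n : nat) : R :=
  match n with
  | O => x
  | S m => rising_prod x m * (x + INR (S m))
  end.

Definition gauss_seq (x : R) (n : nat) : R :=
  Rpower (INR (S n)) x * INR (fact (S n)) / rising_prod x (S n).

Definition Gamma (x : R) : R :=
  epsilon (inhabits 0) (fun l => Un_cv (gauss_seq x) l).

(* Perturbed ERWS. Steps are integers in {-1,0,1}. A history is a list of
   steps stored NEWEST FIRST: [sigma_t; ...; sigma_1]. *)

(* transition kernel: probability that the new step is b given that the
   uniformly chosen remembered step is a *)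
Definition K (p q r eps : R) (a b : Z) : R :=
  if Z.eqb a 0 then (if Z.eqb b 0 then 1 - eps else eps / 2)
  else if Z.eqb b a then p
  else if Z.eqb b (- a) then q
  else r.

Fixpoint histories (t : nat) : list (list Z) :=
  match t with
  | O => [ [] ]
  | S n => flat_map (fun h => map (fun b => b :: h) [(-1)%Z; 0%Z; 1%Z])
                    (histories n)
  end.

Fixpoint sumR (l : list R) : R :=
  match l with [] => 0 | x :: l' => x + sumR l' end.

Fixpoint prob (p q r eps s : R) (h : list Z) : R :=
  match h with
  | [] => 1
  | b :: h' =>
      match h' with
      | [] => if Z.eqb b 1 then s else if Z.eqb b (-1) then 1 - s else 0
      | _ :: _ =>
          prob p q r eps s h' *
          (sumR (map (fun a => K p q r eps a b) h') / INR (length h'))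
      end
  end.

Definition position (h : list Z) : R := IZR (fold_right Z.add 0%Z h).

Definition EX2 (p q r eps s : R) (t : nat) : R :=
  sumR (map (fun h => prob p q r eps s h * (position h) ^ 2) (histories t)).

From Stdlib Require Import Reals ZArith List ClassicalEpsilon Lra Lia.
From Coquelicot Require Import Coquelicot.
Open Scope R_scope.
Import ListNotations.

(* Given the first t steps, the next step depends on the history only through
   t, the position X_t and the number N_t of nonzero steps, and linearly so.
   Taking expectations gives the first-order recurrences
     E N_(t+1)   = (1 + (1 - r - eps) / t) E N_t + eps,
     E X_(t+1)^2 = (1 + 2 gamma / t) E X_t^2 + (1 - r - eps) / t E N_t + eps,
   with E N_1 = E X_1^2 = 1.  Ratios Gamma (t + a) / Gamma t solve the
   homogeneous equations, so the closed forms are verified with the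
   functional equation Gamma (x + 1) = x Gamma x, and the limit follows from
   Gamma (t + a) / (Gamma t t^a) -> 1.  Both facts about Gamma are derived from
   Gauss's product: it is increasing and bounded for x > 0, and the range
   (-1, 0), needed for a = 1 - eps - r, is reached through the functional
   equation. *)

(** * The Gamma function *)

Lemma Gamma_eq x l : Un_cv (gauss_seq x) l -> Gamma x = l.
Proof.
  intro Hl. unfold Gamma.
  apply (UL_sequence (gauss_seq x)); [|exact Hl].
  apply (epsilon_spec (inhabits 0) (fun l => Un_cv (gauss_seq x) l)). now exists l.
Qed.

Lemma rising_prod_shift x m :
  x * rising_prod (x + 1) m = rising_prod x m * (x + INR m + 1).
Proof.
  induction m as [|m IH]; cbn [rising_prod]; [simpl; ring|].
  rewrite <- Rmult_assoc, IH, S_INR. ring.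
Qed.

Lemma rising_prod_pos x m : 0 < x -> 0 < rising_prod x m.
Proof.
  intro Hx. induction m as [|m IH]; cbn [rising_prod]; auto.
  apply Rmult_lt_0_compat; auto. pose proof (pos_INR (S m)); lra.
Qed.

Lemma rising_prod_neq0 x m : -1 < x -> x <> 0 -> rising_prod x m <> 0.
Proof.
  intros Hx1 Hx0. induction m as [|m IH]; cbn [rising_prod]; auto.
  apply Rmult_integral_contrapositive_currified; auto.
  rewrite S_INR. pose proof (pos_INR m); lra.
Qed.

Lemma gauss_seq_pos x n : 0 < x -> 0 < gauss_seq x n.
Proof.
  intro Hx. unfold gauss_seq, Rdiv, Rpower.
  apply Rmult_lt_0_compat; [apply Rmult_lt_0_compat|].
  - apply exp_pos.
  - apply lt_0_INR, lt_O_fact.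
  - apply Rinv_0_lt_compat, rising_prod_pos, Hx.
Qed.

Lemma gauss_seq_succ_arg x n : -1 < x -> x <> 0 ->
  gauss_seq (x + 1) n = gauss_seq x n * x * INR (S n) / (x + INR (S n) + 1).
Proof.
  intros Hx1 Hx0. unfold gauss_seq.
  assert (Hn : 0 < INR (S n)) by (apply lt_0_INR; lia).
  rewrite Rpower_plus, Rpower_1 by exact Hn.
  assert (Hp : rising_prod x (S n) <> 0) by now apply rising_prod_neq0.
  replace (rising_prod (x + 1) (S n))
    with (rising_prod x (S n) * (x + INR (S n) + 1) / x)
    by (rewrite <- rising_prod_shift; field; exact Hx0).
  field. repeat split; auto; lra.
Qed.

Lemma gauss_seq_succ x n : 0 < x ->
  gauss_seq x (S n) = gauss_seq x n
    * exp (x * (ln (INR (S n) + 1) - ln (INR (S n))))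
    * ((INR (S n) + 1) / (x + INR (S n) + 1)).
Proof.
  intro Hx. unfold gauss_seq, Rpower.
  replace (INR (S (S n))) with (INR (S n) + 1) by (rewrite (S_INR (S n)); ring).
  replace (exp (x * ln (INR (S n) + 1)))
    with (exp (x * ln (INR (S n))) * exp (x * (ln (INR (S n) + 1) - ln (INR (S n)))))
    by (rewrite <- exp_plus; f_equal; ring).
  change (fact (S (S n))) with (S (S n) * fact (S n))%nat.
  rewrite mult_INR.
  replace (INR (S (S n))) with (INR (S n) + 1) by (rewrite (S_INR (S n)); ring).
  cbn [rising_prod]. rewrite (S_INR (S n)).
  pose proof (rising_prod_pos x (S n) Hx). pose proof (pos_INR (S n)).
  pose proof (rising_prod_pos x n Hx).
  field. repeat split; lra.
Qed.

Lemma exp_le_compat x y : x <= y -> exp x <= exp y.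
Proof. intros [Hlt|Heq]; [left; now apply exp_increasing|right; now rewrite Heq]. Qed.

Lemma ln_le_pred y : 0 < y -> ln y <= y - 1.
Proof. intro Hy. pose proof (exp_ineq1_le (ln y)) as H. rewrite exp_ln in H; lra. Qed.

Lemma ln_succ_sub_bounds b : 0 < b -> 1 / (b + 1) <= ln (b + 1) - ln b <= 1 / b.
Proof.
  intro Hb. split.
  - pose proof (ln_le_pred (b / (b + 1))) as L.
    unfold Rdiv in L. rewrite ln_mult, ln_Rinv in L by (try apply Rinv_0_lt_compat; lra).
    assert (b * / (b + 1) - 1 = - (1 / (b + 1))) by (field; lra).
    assert (0 < b * / (b + 1)) by (apply Rmult_lt_0_compat; try apply Rinv_0_lt_compat; lra).
    lra.
  - pose proof (ln_le_pred ((b + 1) / b)) as L.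
    unfold Rdiv in L. rewrite ln_mult, ln_Rinv in L by (try apply Rinv_0_lt_compat; lra).
    assert ((b + 1) * / b - 1 = 1 / b) by (field; lra).
    assert (0 < (b + 1) * / b) by (apply Rmult_lt_0_compat; try apply Rinv_0_lt_compat; lra).
    lra.
Qed.

Lemma gauss_seq_growing x : 0 < x -> Un_growing (gauss_seq x).
Proof.
  intros Hx n. rewrite gauss_seq_succ by exact Hx.
  assert (Hb : 0 < INR (S n)) by (apply lt_0_INR; lia).
  pose proof (ln_succ_sub_bounds _ Hb) as [Hlow _].
  pose proof (gauss_seq_pos x n Hx).
  set (b := INR (S n)) in *. set (dl := ln (b + 1) - ln b) in *.
  pose proof (exp_ineq1_le (x * dl)).
  assert (x * (1 / (b + 1)) <= x * dl) by (apply Rmult_le_compat_l; lra).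
  assert (Hge1 : 1 <= exp (x * dl) * ((b + 1) / (x + b + 1))).
  { apply Rle_trans with ((1 + x * (1 / (b + 1))) * ((b + 1) / (x + b + 1))).
    - right. field. lra.
    - apply Rmult_le_compat_r; [apply Rlt_le, Rdiv_lt_0_compat|]; lra. }
  rewrite Rmult_assoc. rewrite <- (Rmult_1_r (gauss_seq x n)) at 1.
  apply Rmult_le_compat_l; lra.
Qed.

(* Multiplying by exp (x (1 + x) / (n + 1)) compensates the growth of the
   Gauss sequence: the product is nonincreasing, which gives the upper bound. *)
Lemma gauss_seq_damped_decreasing x n : 0 < x ->
  gauss_seq x (S n) * exp (x * (1 + x) / INR (S (S n)))
  <= gauss_seq x n * exp (x * (1 + x) / INR (S n)).
Proof.
  intro Hx. rewrite gauss_seq_succ by exact Hx.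
  assert (Hb : 0 < INR (S n)) by (apply lt_0_INR; lia).
  pose proof (ln_succ_sub_bounds _ Hb) as [_ Hup].
  pose proof (gauss_seq_pos x n Hx).
  replace (INR (S (S n))) with (INR (S n) + 1) by (rewrite (S_INR (S n)); ring).
  set (b := INR (S n)) in *. set (dl := ln (b + 1) - ln b) in *.
  set (k := x * (1 + x)).
  assert (Hexp : exp (x * dl) <= exp (x / b)).
  { apply exp_le_compat. unfold Rdiv.
    replace (x * / b) with (x * (1 / b)) by (unfold Rdiv; ring).
    apply Rmult_le_compat_l; lra. }
  assert (Hfrac : (b + 1) / (x + b + 1) <= exp (- (x / (x + b + 1)))).
  { pose proof (exp_ineq1_le (- (x / (x + b + 1)))).
    replace ((b + 1) / (x + b + 1)) with (1 + - (x / (x + b + 1))) by (field; lra). lra. }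
  assert (Hsum : x / b - x / (x + b + 1) + k / (b + 1) <= k / b).
  { apply Rminus_le. unfold k.
    replace (x / b - x / (x + b + 1) + x * (1 + x) / (b + 1) - x * (1 + x) / b)
      with (- (x * (1 + x) * x / (b * (x + b + 1) * (b + 1)))) by (field; lra).
    assert (0 < x * (1 + x) * x / (b * (x + b + 1) * (b + 1))).
    { apply Rdiv_lt_0_compat; apply Rmult_lt_0_compat; nra. }
    lra. }
  assert (Hfactor : exp (x * dl) * ((b + 1) / (x + b + 1)) * exp (k / (b + 1)) <= exp (k / b)).
  { apply Rle_trans with (exp (x / b) * exp (- (x / (x + b + 1))) * exp (k / (b + 1))).
    - apply Rmult_le_compat_r; [left; apply exp_pos|].
      apply Rmult_le_compat; auto; [left; apply exp_pos|apply Rlt_le, Rdiv_lt_0_compat; lra].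
    - rewrite <- !exp_plus. apply exp_le_compat. lra. }
  rewrite !Rmult_assoc. apply Rmult_le_compat_l; [lra|].
  rewrite <- Rmult_assoc. exact Hfactor.
Qed.

Lemma gauss_seq_bounded x n : 0 < x ->
  gauss_seq x n <= gauss_seq x 0 * exp (x * (1 + x) / INR (S 0)).
Proof.
  intro Hx. apply Rle_trans with (gauss_seq x n * exp (x * (1 + x) / INR (S n))).
  - pose proof (gauss_seq_pos x n Hx).
    assert (1 <= exp (x * (1 + x) / INR (S n))).
    { pose proof (exp_ineq1_le (x * (1 + x) / INR (S n))).
      assert (0 <= x * (1 + x) / INR (S n))
        by (apply Rlt_le, Rdiv_lt_0_compat; [nra|apply lt_0_INR; lia]).
      lra. }
    nra.
  - induction n as [|n IH]; [lra|].
    eapply Rle_trans; [apply gauss_seq_damped_decreasing, Hx|exact IH].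
Qed.

Lemma Gamma_pos_cv x : 0 < x -> Un_cv (gauss_seq x) (Gamma x) /\ 0 < Gamma x.
Proof.
  intro Hx.
  destruct (growing_cv _ (gauss_seq_growing x Hx)) as [L HL].
  { exists (gauss_seq x 0 * exp (x * (1 + x) / INR (S 0))).
    intros y [n ->]. now apply gauss_seq_bounded. }
  rewrite (Gamma_eq x L HL). split; [exact HL|].
  pose proof (growing_ineq _ L (gauss_seq_growing x Hx) HL 0).
  pose proof (gauss_seq_pos x 0 Hx). lra.
Qed.

Lemma lim_affine_ratio a b : Un_cv (fun n => (INR n + a) / (INR n + b)) 1.
Proof.
  apply is_lim_seq_Reals.
  assert (Hinv : is_lim_seq (fun n => / (INR n + b)) 0).
  { replace (Finite 0) with (Rbar_inv p_infty) by reflexivity.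
    apply is_lim_seq_inv; [|discriminate].
    eapply is_lim_seq_plus; [apply is_lim_seq_INR|apply is_lim_seq_const|constructor]. }
  assert (Hlim : is_lim_seq (fun n => 1 + (a - b) * / (INR n + b)) (1 + (a - b) * 0)).
  { apply is_lim_seq_plus'; [apply is_lim_seq_const|].
    apply is_lim_seq_mult'; [apply is_lim_seq_const|exact Hinv]. }
  rewrite Rmult_0_r, Rplus_0_r in Hlim.
  eapply is_lim_seq_ext_loc; [|exact Hlim].
  destruct (INR_unbounded (Rabs b)) as [N HN].
  exists N. intros n Hn. assert (INR N <= INR n) by (apply le_INR; lia).
  pose proof (Rle_abs (- b)). rewrite Rabs_Ropp in *.
  field. lra.
Qed.

Lemma Gamma_succ_pos x : 0 < x -> Gamma (x + 1) = x * Gamma x.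
Proof.
  intro Hx. apply Gamma_eq.
  destruct (Gamma_pos_cv x Hx) as [Hcv _].
  apply is_lim_seq_Reals. apply is_lim_seq_Reals in Hcv.
  pose proof (lim_affine_ratio 1 (x + 2)) as Hr. apply is_lim_seq_Reals in Hr.
  replace (x * Gamma x) with (Gamma x * x * 1) by ring.
  apply is_lim_seq_ext with (fun n => gauss_seq x n * x * ((INR n + 1) / (INR n + (x + 2)))).
  { intro n. rewrite gauss_seq_succ_arg, S_INR by lra. pose proof (pos_INR n).
    replace (x + (INR n + 1) + 1) with (INR n + (x + 2)) by ring. field. lra. }
  apply is_lim_seq_mult'; [apply is_lim_seq_mult'; [exact Hcv|apply is_lim_seq_const]|exact Hr].
Qed.

(* On (-1, 0) the Gauss sequence is that of x + 1 divided by x, up to a factor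
   tending to 1. *)
Lemma Gamma_neg_cv x : -1 < x < 0 ->
  Un_cv (gauss_seq x) (Gamma x) /\ Gamma (x + 1) = x * Gamma x.
Proof.
  intro Hx.
  assert (Hcv : Un_cv (gauss_seq x) (Gamma (x + 1) * / x * 1)).
  { destruct (Gamma_pos_cv (x + 1)) as [Hcv _]; [lra|].
    apply is_lim_seq_Reals. apply is_lim_seq_Reals in Hcv.
    pose proof (lim_affine_ratio (x + 2) 1) as Hr. apply is_lim_seq_Reals in Hr.
    apply is_lim_seq_ext
      with (fun n => gauss_seq (x + 1) n * / x * ((INR n + (x + 2)) / (INR n + 1))).
    { intro n. rewrite gauss_seq_succ_arg, S_INR by lra. pose proof (pos_INR n).
      field. repeat split; lra. }
    apply is_lim_seq_mult'; [apply is_lim_seq_mult'; [exact Hcv|apply is_lim_seq_const]|exact Hr]. }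
  rewrite (Gamma_eq _ _ Hcv). split; [exact Hcv|field; lra].
Qed.

Lemma Gamma_cv x : -1 < x -> x <> 0 -> Un_cv (gauss_seq x) (Gamma x) /\ Gamma x <> 0.
Proof.
  intros Hx1 Hx0. destruct (Rlt_or_le 0 x) as [Hpos|Hneg].
  - destruct (Gamma_pos_cv x Hpos). split; [assumption|lra].
  - destruct (Gamma_neg_cv x) as [Hcv Hrec]; [lra|]. split; [exact Hcv|].
    intro H0. destruct (Gamma_pos_cv (x + 1)) as [_ Hp]; [lra|]. rewrite Hrec, H0 in Hp. lra.
Qed.

Lemma Gamma_succ x : -1 < x -> x <> 0 -> Gamma (x + 1) = x * Gamma x.
Proof.
  intros Hx1 Hx0. destruct (Rlt_or_le 0 x).
  - now apply Gamma_succ_pos.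
  - apply Gamma_neg_cv. lra.
Qed.

Lemma Gamma_1 : Gamma 1 = 1.
Proof.
  assert (Hfact : forall m, rising_prod 1 m = INR (fact (S m))).
  { induction m as [|m IH]; cbn [rising_prod]; [simpl; ring|].
    rewrite IH. change (fact (S (S m))) with (S (S m) * fact (S m))%nat.
    rewrite mult_INR, (S_INR (S m)). ring. }
  apply Gamma_eq, Un_cv_ext with (fun n => (INR n + 1) / (INR n + 2)); [|apply lim_affine_ratio].
  intro n. unfold gauss_seq. rewrite Rpower_1 by (apply lt_0_INR; lia).
  rewrite Hfact. change (fact (S (S n))) with (S (S n) * fact (S n))%nat.
  rewrite mult_INR, !S_INR. pose proof (pos_INR n). pose proof (INR_fact_lt_0 (S n)).
  field. lra.
Qed.

Lemma Gamma_INR_succ n : Gamma (INR n + 1) = INR (fact n).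
Proof.
  induction n as [|n IH]; [simpl; rewrite Rplus_0_l; apply Gamma_1|].
  rewrite S_INR. pose proof (pos_INR n).
  rewrite Gamma_succ, IH by lra.
  change (fact (S n)) with (S n * fact n)%nat. rewrite mult_INR, S_INR. ring.
Qed.

Lemma rising_prod_Gamma x m : -1 < x -> x <> 0 ->
  rising_prod x m * Gamma x = Gamma (x + INR m + 1).
Proof.
  intros Hx1 Hx0. induction m as [|m IH]; cbn [rising_prod].
  - rewrite Rplus_0_r, Gamma_succ; auto.
  - rewrite Rmult_assoc, (Rmult_comm (x + INR (S m))), <- Rmult_assoc, IH, S_INR.
    pose proof (pos_INR m).
    replace (x + (INR m + 1) + 1) with ((x + INR m + 1) + 1) by ring.
    rewrite (Gamma_succ (x + INR m + 1)) by lra. ring.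
Qed.

Lemma INR_ge_1 t : (1 <= t)%nat -> 1 <= INR t.
Proof. intro Ht. apply (le_INR 1). exact Ht. Qed.

Lemma Gamma_INR_pos t : (1 <= t)%nat -> 0 < Gamma (INR t).
Proof. intro Ht. apply Gamma_pos_cv, lt_0_INR. lia. Qed.

Lemma Gamma_INR_shift t a : 0 < INR t + a ->
  Gamma (INR (S t) + a) = (INR t + a) * Gamma (INR t + a).
Proof.
  intro Ht. rewrite S_INR. replace (INR t + 1 + a) with (INR t + a + 1) by ring.
  apply Gamma_succ; lra.
Qed.

Lemma Gamma_S_INR t : (1 <= t)%nat -> Gamma (INR (S t)) = INR t * Gamma (INR t).
Proof. intro Ht. pose proof (INR_ge_1 t Ht). rewrite S_INR. apply Gamma_succ; lra. Qed.

(* Gamma (n + x) / (Gamma n * n^x) is Gamma x divided by the Gauss sequence,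
   up to a factor tending to 1. *)
Lemma Gamma_ratio_asymptotic x : -1 < x -> x <> 0 ->
  Un_cv (fun n => Gamma (INR (S n) + x) / Gamma (INR (S n)) / Rpower (INR (S n)) x) 1.
Proof.
  intros Hx1 Hx0. destruct (Gamma_cv x Hx1 Hx0) as [Hcv HG].
  apply Un_cv_ext with (fun n => Gamma x / gauss_seq x n * ((INR n + 1) / (INR n + (1 + x)))).
  - intro n. pose proof (pos_INR n). pose proof (pos_INR (S n)).
    pose proof (rising_prod_Gamma x (S n) Hx1 Hx0) as Hrp.
    rewrite Gamma_succ in Hrp by (rewrite S_INR; lra).
    replace (x + INR (S n)) with (INR (S n) + x) in Hrp by ring.
    assert (Hn : rising_prod x (S n) <> 0) by now apply rising_prod_neq0.
    assert (Hfact : Gamma (INR (S n)) = INR (fact n)) by (rewrite S_INR; apply Gamma_INR_succ).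
    assert (0 < Rpower (INR (S n)) x) by apply exp_pos.
    pose proof (INR_fact_lt_0 n).
    unfold gauss_seq. change (fact (S n)) with (S n * fact n)%nat.
    rewrite mult_INR, Hfact.
    replace (Gamma (INR (S n) + x)) with (rising_prod x (S n) * Gamma x / (INR (S n) + x))
      by (rewrite Hrp; field; rewrite S_INR; lra).
    rewrite S_INR in *. field. repeat split; lra.
  - rewrite <- (Rmult_1_r 1). apply is_lim_seq_Reals.
    apply is_lim_seq_mult'; [|apply is_lim_seq_Reals, lim_affine_ratio].
    replace 1 with (Gamma x / Gamma x) by (field; exact HG).
    apply is_lim_seq_div'; [apply is_lim_seq_const|apply is_lim_seq_Reals, Hcv|exact HG].
Qed.

Lemma Rpower_INR_neg_cv k : 0 < k -> Un_cv (fun n => Rpower (INR (S n)) (- k)) 0.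
Proof.
  intros Hk e He.
  destruct (INR_unbounded (Rpower (/ e) (/ k))) as [N HN].
  exists N. intros n Hn. unfold Rdist. rewrite Rminus_0_r.
  assert (0 < Rpower (INR (S n)) (- k)) by apply exp_pos.
  rewrite Rabs_pos_eq, Rpower_Ropp by lra.
  assert (INR N <= INR n) by (apply le_INR; lia).
  assert (0 < Rpower (/ e) (/ k)) by apply exp_pos.
  assert (Hlt : Rpower (Rpower (/ e) (/ k)) k < Rpower (INR (S n)) k).
  { apply Rlt_Rpower_l; auto. rewrite S_INR. lra. }
  rewrite Rpower_mult, Rinv_l, Rpower_1 in Hlt by (try apply Rinv_0_lt_compat; lra).
  assert (0 < / e) by (apply Rinv_0_lt_compat; lra).
  replace e with (/ / e) by (field; lra).
  apply Rinv_lt_contravar; [apply Rmult_lt_0_compat|]; lra.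
Qed.

(** * Moments of the walk *)

Definition expect (p q r eps s : R) (t : nat) (f : list Z -> R) : R :=
  sumR (map (fun h => prob p q r eps s h * f h) (histories t)).

(* Steps lie in {-1, 0, 1}, so this counts the nonzero steps. *)
Definition moves (h : list Z) : R := sumR (map (fun a => IZR a ^ 2) h).

Definition is_step (a : Z) : Prop := a = (-1)%Z \/ a = 0%Z \/ a = 1%Z.

Lemma sumR_app l1 l2 : sumR (l1 ++ l2) = sumR l1 + sumR l2.
Proof. induction l1 as [|x l1 IH]; simpl; [ring|rewrite IH; ring]. Qed.

Lemma sumR_map_flat_map {A B : Type} (F : B -> R) (g : A -> list B) l :
  sumR (map F (flat_map g l)) = sumR (map (fun x => sumR (map F (g x))) l).
Proof. induction l as [|x l IH]; simpl; [reflexivity|now rewrite map_app, sumR_app, IH]. Qed.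

Lemma sumR_map_affine {A : Type} (P F G : A -> R) l a b c :
  sumR (map (fun h => P h * (a * F h + b * G h + c)) l) =
  a * sumR (map (fun h => P h * F h) l) + b * sumR (map (fun h => P h * G h) l)
  + c * sumR (map (fun h => P h * 1) l).
Proof. induction l as [|x l IH]; simpl; [ring|rewrite IH; ring]. Qed.

Lemma in_histories t h : In h (histories t) -> length h = t /\ List.Forall is_step h.
Proof.
  revert h; induction t as [|t IH]; simpl; intros h Hh.
  - destruct Hh as [<-|[]]. auto.
  - apply in_flat_map in Hh as [h0 [Hh0 Hh]]. apply IH in Hh0 as [Hlen Hsteps].
    unfold is_step. destruct Hh as [<-|[<-|[<-|[]]]]; simpl; auto.
Qed.

Lemma prob_cons p q r eps s b h : h <> [] ->
  prob p q r eps s (b :: h)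
  = prob p q r eps s h * (sumR (map (fun a => K p q r eps a b) h) / INR (length h)).
Proof. destruct h; [congruence|reflexivity]. Qed.

Lemma position_cons a h : position (a :: h) = IZR a + position h.
Proof. unfold position. simpl. now rewrite plus_IZR. Qed.

Lemma sumR_K p q r eps h : List.Forall is_step h ->
  let X := position h in let N := moves h in let L := INR (length h) in
  sumR (map (fun a => K p q r eps a 1%Z) h)
    = p * (N + X) / 2 + q * (N - X) / 2 + (L - N) * eps / 2 /\
  sumR (map (fun a => K p q r eps a (-1)%Z) h)
    = p * (N - X) / 2 + q * (N + X) / 2 + (L - N) * eps / 2 /\
  sumR (map (fun a => K p q r eps a 0%Z) h) = r * N + (L - N) * (1 - eps).
Proof.
  induction h as [|a h IH]; intros Hsteps X N L.
  - unfold X, N, L, position, moves; simpl. repeat split; field.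
  - inversion Hsteps as [|? ? Ha Hh]; subst. destruct (IH Hh) as [I1 [I2 I3]].
    unfold X, N, L. rewrite position_cons. unfold moves. cbn [length map sumR].
    fold (moves h). rewrite S_INR, I1, I2, I3.
    destruct Ha as [-> | [-> | ->]]; unfold K; simpl; repeat split; field.
Qed.

Section Moments.

Variables p q r eps s : R.
Hypothesis hpqr : p + q + r = 1.

(* If, given the history, the conditional expectation of f one step later is
   a F + b G + c, then so is its expectation. *)
Lemma expect_succ_affine t (f F G : list Z -> R) a b c : (1 <= t)%nat ->
  (forall h,
     let X := position h in let N := moves h in
     (p * (N - X) / 2 + q * (N + X) / 2 + (INR t - N) * eps / 2) / INR t * f ((-1)%Z :: h)
     + (r * N + (INR t - N) * (1 - eps)) / INR t * f (0%Z :: h)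
     + (p * (N + X) / 2 + q * (N - X) / 2 + (INR t - N) * eps / 2) / INR t * f (1%Z :: h)
     = a * F h + b * G h + c) ->
  expect p q r eps s (S t) f
  = a * expect p q r eps s t F + b * expect p q r eps s t G
    + c * expect p q r eps s t (fun _ => 1).
Proof.
  intros Ht Hf. unfold expect. cbn [histories]. rewrite sumR_map_flat_map, <- sumR_map_affine.
  f_equal. apply map_ext_in. intros h Hh.
  destruct (in_histories t h Hh) as [Hlen Hsteps].
  assert (h <> []) by (intro E; rewrite E in Hlen; simpl in Hlen; lia).
  destruct (sumR_K p q r eps h Hsteps) as [K1 [K2 K3]].
  cbn [map sumR]. rewrite !prob_cons, K1, K2, K3, Hlen, <- Hf by assumption. ring.
Qed.

Lemma expect_one_succ t : (1 <= t)%nat ->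
  expect p q r eps s (S t) (fun _ => 1) = expect p q r eps s t (fun _ => 1).
Proof.
  intro Ht. assert (0 < INR t) by (apply lt_0_INR; lia).
  rewrite (expect_succ_affine t _ (fun _ => 1) (fun _ => 1) 1 0 0 Ht); [ring|].
  intros h X N. replace r with (1 - p - q) by lra. field. lra.
Qed.

Lemma expect_one t : (1 <= t)%nat -> expect p q r eps s t (fun _ => 1) = 1.
Proof.
  induction t as [|[|t] IH]; intro Ht; [lia|unfold expect; simpl; ring|].
  rewrite expect_one_succ by lia. apply IH. lia.
Qed.

Lemma expect_moves_succ t : (1 <= t)%nat ->
  expect p q r eps s (S t) moves
  = (1 + (1 - r - eps) / INR t) * expect p q r eps s t moves + eps.
Proof.
  intro Ht. assert (0 < INR t) by (apply lt_0_INR; lia).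
  rewrite (expect_succ_affine t _ moves moves (1 + (1 - r - eps) / INR t) 0 eps Ht).
  { rewrite expect_one by exact Ht. ring. }
  intros h X N. unfold moves at 1 2 3. cbn [map sumR]. fold (moves h). fold N.
  replace r with (1 - p - q) by lra. field. lra.
Qed.

Lemma expect_sq_succ t : (1 <= t)%nat ->
  expect p q r eps s (S t) (fun h => position h ^ 2)
  = (1 + 2 * (p - q) / INR t) * expect p q r eps s t (fun h => position h ^ 2)
    + (1 - r - eps) / INR t * expect p q r eps s t moves + eps.
Proof.
  intro Ht. assert (0 < INR t) by (apply lt_0_INR; lia).
  rewrite (expect_succ_affine t _ (fun h => position h ^ 2) moves
             (1 + 2 * (p - q) / INR t) ((1 - r - eps) / INR t) eps Ht).
  { rewrite expect_one by exact Ht. ring. }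
  intros h X N. rewrite !position_cons. fold X. simpl. fold N.
  replace r with (1 - p - q) by lra. field. lra.
Qed.

End Moments.

Lemma expect_base p q r eps s :
  expect p q r eps s 1 moves = 1 /\ expect p q r eps s 1 (fun h => position h ^ 2) = 1.
Proof. unfold expect, moves, position. simpl. split; ring. Qed.

(** * Closed forms *)

Lemma recurrence_unique (g : nat -> R -> R) (u v : nat -> R) :
  u 1%nat = v 1%nat ->
  (forall t, (1 <= t)%nat -> u (S t) = g t (u t)) ->
  (forall t, (1 <= t)%nat -> v (S t) = g t (v t)) ->
  forall t, (1 <= t)%nat -> u t = v t.
Proof.
  intros H1 Hu Hv t Ht. induction t as [|[|t] IH]; [lia|exact H1|].
  rewrite Hu, Hv, IH by lia. reflexivity.
Qed.

Section ClosedForms.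

Variables r eps : R.
Hypotheses (hr : 0 < r < 1) (heps : 0 < eps < 1) (hne : eps + r <> 1).

Definition mean_moves (t : nat) : R :=
  eps / (eps + r) * INR t
  + r / ((eps + r) * (1 - eps - r) * Gamma (1 - eps - r))
    * (Gamma (INR t + (1 - eps - r)) / Gamma (INR t)).

Definition mean_sq (t : nat) : R :=
  - INR t / (r * (eps + r))
  - r * Gamma (INR t + 1 - eps - r)
      / ((eps + r) * (eps + r + eps * r) * Gamma (1 - eps - r) * Gamma (INR t))
  + / Gamma (1 + eps * r)
      * (1 / (r * (eps + r)) + r / ((eps + r) * (eps + r + eps * r)))
      * (Gamma (INR t + 1 + eps * r) / Gamma (INR t)).

Let c := 1 - eps - r.
Let d := 1 + eps * r.

Lemma Gamma_c_neq0 : Gamma c <> 0.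
Proof. apply Gamma_cv; unfold c; lra. Qed.

Lemma Gamma_d_pos : 0 < Gamma d.
Proof. apply Gamma_pos_cv. unfold d. nra. Qed.

Lemma mean_moves_1 : mean_moves 1 = 1.
Proof.
  unfold mean_moves. change (INR 1) with 1.
  rewrite Gamma_1, (Rplus_comm 1), Gamma_succ by (unfold c in *; lra).
  pose proof Gamma_c_neq0. unfold c in *. field. repeat split; lra.
Qed.

Lemma mean_moves_succ t : (1 <= t)%nat ->
  mean_moves (S t) = (1 + (1 - r - eps) / INR t) * mean_moves t + eps.
Proof.
  intro Ht. pose proof (INR_ge_1 t Ht). pose proof (Gamma_INR_pos t Ht). pose proof Gamma_c_neq0.
  unfold mean_moves. fold c.
  rewrite (Gamma_INR_shift t c), Gamma_S_INR by (unfold c; lra || exact Ht).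
  rewrite S_INR. unfold c in *. field. repeat split; lra.
Qed.

Lemma mean_sq_Gamma_shifts t :
  Gamma (INR t + 1 - eps - r) = Gamma (INR t + c)
  /\ Gamma (INR t + 1 + eps * r) = Gamma (INR t + d).
Proof. unfold c, d. split; f_equal; ring. Qed.

Lemma mean_sq_1 : mean_sq 1 = 1.
Proof.
  unfold mean_sq. destruct (mean_sq_Gamma_shifts 1) as [-> ->]. change (INR 1) with 1.
  rewrite Gamma_1, (Rplus_comm 1 c), (Rplus_comm 1 d), !Gamma_succ by (unfold c, d; nra).
  pose proof Gamma_c_neq0. pose proof Gamma_d_pos. unfold c, d in *.
  field. repeat split; nra.
Qed.

Lemma mean_sq_succ t : (1 <= t)%nat ->
  mean_sq (S t) = (1 + (1 + eps * r) / INR t) * mean_sq t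
                  + (1 - r - eps) / INR t * mean_moves t + eps.
Proof.
  intro Ht. pose proof (INR_ge_1 t Ht). pose proof (Gamma_INR_pos t Ht).
  pose proof Gamma_c_neq0. pose proof Gamma_d_pos.
  unfold mean_sq, mean_moves. fold c.
  destruct (mean_sq_Gamma_shifts t) as [-> ->]. destruct (mean_sq_Gamma_shifts (S t)) as [-> ->].
  rewrite (Gamma_INR_shift t c), (Gamma_INR_shift t d), Gamma_S_INR
    by (unfold c, d; nra || exact Ht).
  rewrite S_INR. unfold c, d in *. field. repeat split; nra.
Qed.

(* Divided by t^d, the three terms of mean_sq behave like t^(-eps r),
   t^(c - d) and a constant, by the asymptotics of Gamma (t + x) / Gamma t. *)
Lemma mean_sq_scaled_cv :
  Un_cv (fun t => mean_sq t / Rpower (INR t) (1 + eps * r))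
        (/ Gamma (1 + eps * r)
           * (1 / (r * (eps + r)) + r / ((eps + r) * (eps + r + eps * r)))).
Proof.
  fold d. set (K0 := 1 / (r * (eps + r)) + r / ((eps + r) * (eps + r + eps * r))).
  set (a := - / (r * (eps + r))).
  set (b := - r / ((eps + r) * (eps + r + eps * r) * Gamma c)).
  pose proof Gamma_c_neq0. pose proof Gamma_d_pos.
  replace (/ Gamma d * K0) with (a * 0 + b * (1 * 0) + / Gamma d * K0 * 1) by ring.
  apply CV_shift with 1%nat.
  apply Un_cv_ext with (fun n =>
      a * Rpower (INR (S n)) (- (eps * r))
    + b * (Gamma (INR (S n) + c) / Gamma (INR (S n)) / Rpower (INR (S n)) c
           * Rpower (INR (S n)) (- (eps + r + eps * r)))
    + / Gamma d * K0 * (Gamma (INR (S n) + d) / Gamma (INR (S n)) / Rpower (INR (S n)) d)).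
  - intro n. rewrite Nat.add_1_r. unfold mean_sq. destruct (mean_sq_Gamma_shifts (S n)) as [-> ->].
    pose proof (Gamma_INR_pos (S n) ltac:(lia)).
    assert (Ht : 0 < INR (S n)) by (apply lt_0_INR; lia).
    set (t := INR (S n)) in *.
    assert (Ed : Rpower t d = t * Rpower t (eps * r))
      by (unfold d; rewrite Rpower_plus, Rpower_1; auto).
    assert (Ec : Rpower t c = Rpower t (- (eps + r + eps * r)) * Rpower t d)
      by (rewrite <- Rpower_plus; f_equal; unfold c, d; ring).
    assert (0 < Rpower t (eps * r)) by apply exp_pos.
    assert (0 < Rpower t (- (eps + r + eps * r))) by apply exp_pos.
    rewrite Rpower_Ropp, Ec, Ed. unfold a, b, K0. fold c d.
    field. repeat split; nra.
  - assert (0 < eps * r) by nra.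
    apply CV_plus; [apply CV_plus|]; apply CV_mult; try apply is_lim_seq_Reals, is_lim_seq_const.
    + now apply Rpower_INR_neg_cv.
    + apply CV_mult; [apply Gamma_ratio_asymptotic; unfold c; lra|apply Rpower_INR_neg_cv; lra].
    + apply Gamma_ratio_asymptotic; unfold d; lra.
Qed.

End ClosedForms.

Lemma expect_moves_closed p q r eps s
  (hr : 0 < r < 1) (heps : 0 < eps < 1) (hne : eps + r <> 1) (hpqr : p + q + r = 1) :
  forall t, (1 <= t)%nat -> expect p q r eps s t moves = mean_moves r eps t.
Proof.
  apply (recurrence_unique (fun t v => (1 + (1 - r - eps) / INR t) * v + eps)).
  - rewrite mean_moves_1 by assumption. apply expect_base.
  - now apply expect_moves_succ.
  - now apply mean_moves_succ.
Qed.

Lemma EX2_closed p q r eps s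
  (hr : 0 < r < 1) (heps : 0 < eps < 1) (hne : eps + r <> 1) (hpqr : p + q + r = 1)
  (hgamma : p - q = (1 + eps * r) / 2) :
  forall t, (1 <= t)%nat -> EX2 p q r eps s t = mean_sq r eps t.
Proof.
  apply (recurrence_unique (fun t v => (1 + (1 + eps * r) / INR t) * v
                                       + (1 - r - eps) / INR t * mean_moves r eps t + eps)).
  - rewrite mean_sq_1 by assumption. apply expect_base.
  - intros t Ht. unfold EX2. fold (expect p q r eps s (S t) (fun h => position h ^ 2)).
    rewrite expect_sq_succ, expect_moves_closed, hgamma by assumption.
    replace (2 * ((1 + eps * r) / 2)) with (1 + eps * r) by field. reflexivity.
  - now apply mean_sq_succ.
Qed.

Theorem mainTheorem9 (p q r eps s : R)
  (hp : 0 < p < 1) (hq : 0 < q < 1) (hr : 0 < r < 1) (hpqr : p + q + r = 1)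
  (heps : 0 < eps < 1) (hs : 0 < s < 1)
  (hne : eps + r <> 1) (hgamma : p - q = (1 + eps * r) / 2) :
  (forall t : nat, (1 <= t)%nat ->
     EX2 p q r eps s t =
       - INR t / (r * (eps + r))
       - r * Gamma (INR t + 1 - eps - r)
           / ((eps + r) * (eps + r + eps * r) * Gamma (1 - eps - r) * Gamma (INR t))
       + / Gamma (1 + eps * r)
           * (1 / (r * (eps + r)) + r / ((eps + r) * (eps + r + eps * r)))
           * (Gamma (INR t + 1 + eps * r) / Gamma (INR t)))
  /\
  Un_cv (fun t => EX2 p q r eps s t / Rpower (INR t) (1 + eps * r))
        (/ Gamma (1 + eps * r)
           * (1 / (r * (eps + r)) + r / ((eps + r) * (eps + r + eps * r)))).
Proof.
  pose proof (EX2_closed p q r eps s hr heps hne hpqr hgamma) as Hclosed.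
  split; [exact Hclosed|].
  apply CV_shift with 1%nat.
  apply Un_cv_ext with (fun n => mean_sq r eps (n + 1) / Rpower (INR (n + 1)) (1 + eps * r)).
  - intro n. rewrite Hclosed by lia. reflexivity.
  - apply (CV_shift' (fun t => mean_sq r eps t / Rpower (INR t) (1 + eps * r))).
    now apply mean_sq_scaled_cv.
Qed.
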